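(* A finite-dimensional Poisson $n$-Lie algebra $\mathcal P$ is nilpotent if and only if the operators $P_x$ and $Q_y$ are nilpotent for all $x\in\mathcal P$ and all $y\in\wedge^{n-1}\mathcal P$.
   Context: A Poisson $n$-Lie algebra is a commutative associative algebra $(\mathcal P,\cdot)$ with an $n$-linear skew-symmetric bracket satisfying the fundamental identity $[x_1,\dots,x_{n-1},[y_1,\dots,y_n]]=\sum_{i=1}^n[y_1,\dots,[x_1,\dots,x_{n-1},y_i],\dots,y_n]$ and the Leibniz rule $[y\cdot z,x_2,\dots,x_n]=y\cdot[z,x_2,\dots,x_n]+z\cdot[y,x_2,\dots,x_n]$. $P_x$ is the multiplication operator $z\mapsto x\cdot z$; for $y=y_1\wedge\cdots\wedge y_{n-1}$, $Q_y$ is the operator $z\mapsto[y_1,\dots,y_{n-1},z]$, extended linearly to $\wedge^{n-1}\mathcal P$. $\mathcal P$ is nilpotent if $\mathcal P^s=0$ for some $s$, where $\mathcal P^1=\mathcal P$, $\mathcal P^{k+1}=[\mathcal P^k,\mathcal P,\dots,\mathcal P]+\mathcal P^k\cdot\mathcal P$ (linear spans). *)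

From HB Require Import structures.
From mathcomp Require Import all_boot all_order all_algebra all_fingroup.
Set Implicit Arguments. Unset Strict Implicit. Unset Printing Implicit Defensive.
Import GRing.Theory.
Local Open Scope ring_scope.

Section PoissonNLie.
Variables (K : fieldType) (V : vectType K) (n : nat).
Variables (mul : V -> V -> V) (br : ('I_n -> V) -> V).

Definition upd (f : 'I_n -> V) (i : 'I_n) (x : V) : 'I_n -> V :=
  fun j => if j == i then x else f j.

(* the n-tuple (x_1, ..., x_{n-1}, z) *)
Definition app_last (x : 'I_n.-1 -> V) (z : V) : 'I_n -> V :=
  fun i => if (insub (nat_of_ord i) : option 'I_n.-1) is Some j then x j else z.

(* Q_x z = [x_1, ..., x_{n-1}, z] for decomposable x = x_1 /\ ... /\ x_{n-1} *)
Definition Qop (x : 'I_n.-1 -> V) (z : V) : V := br (app_last x z).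

Definition Pop (x : V) (z : V) : V := mul x z.

Definition comm_assoc_algebra : Prop :=
  [/\ forall (a : K) x y z, mul (a *: x + y) z = a *: mul x z + mul y z,
      forall (a : K) x y z, mul z (a *: x + y) = a *: mul z x + mul z y,
      forall x y, mul x y = mul y x &
      forall x y z, mul x (mul y z) = mul (mul x y) z].

Definition multilinear : Prop :=
  forall (f : 'I_n -> V) (i : 'I_n) (a : K) (x y : V),
    br (upd f i (a *: x + y)) = a *: br (upd f i x) + br (upd f i y).

Definition skew_symmetric : Prop :=
  forall (f : 'I_n -> V) (s : 'S_n),
    br (fun i => f (s i)) = (-1) ^+ odd_perm s *: br f.

Definition fundamental_identity : Prop :=
  forall (x : 'I_n.-1 -> V) (y : 'I_n -> V),
    Qop x (br y) = \sum_(i < n) br (upd y i (Qop x (y i))).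

Definition leibniz : Prop :=
  forall (f : 'I_n -> V) (i : 'I_n), nat_of_ord i = 0%N ->
    forall y z, br (upd f i (mul y z)) = mul y (br (upd f i z)) + mul z (br (upd f i y)).

Definition poisson_nLie : Prop :=
  [/\ comm_assoc_algebra, multilinear, skew_symmetric, fundamental_identity & leibniz].

Definition nilpotent_op (T : V -> V) : Prop :=
  exists k : nat, forall z, iter k T z = 0.

(* lcs k = P^(k+1): lcs 0 = P,
   lcs (k+1) = span([lcs k, P, ..., P]) + span(lcs k . P) *)
Fixpoint lcs (k : nat) : V -> Prop :=
  match k with
  | 0%N => fun _ => True
  | k'.+1 => fun v =>
      exists (m : nat) (c : 'I_m -> K) (w : 'I_m -> V),
        (forall j,
           (exists f : 'I_n -> V,
              (forall i : 'I_n, nat_of_ord i = 0%N -> lcs k' (f i)) /\ w j = br f)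
           \/ (exists a b : V, lcs k' a /\ w j = mul a b))
        /\ v = \sum_(j < m) c j *: w j
  end.

(* P^s with the paper's indexing P^1 = P *)
Definition Ppow (s : nat) : V -> Prop := lcs s.-1.

Definition nilpotent_alg : Prop :=
  exists s : nat, forall v, Ppow s v -> v = 0.

End PoissonNLie.

(* P_x and Q_y map P^k into P^(k+1), so they are nilpotent once P^s = 0.
   Conversely, the P_x span an abelian Lie algebra L_P of endomorphisms of P and, by the
   fundamental identity, the Q_y span a Lie algebra L_Q; both consist of nilpotent maps.
   Each Q_y is a derivation of the product, so [Q_y, P_x] = P_(Q_y x) and L_Q normalises L_P.
   Engel's theorem, applied to L_P and then to L_Q acting on the vectors that L_P sends into
   a proper invariant subspace U, yields a vector outside U sent into U by both algebras.
   Hence every product of dim P operators from L_P and L_Q vanishes, and since P^(k+1) is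
   spanned by the images of P^k under such operators, P^(dim P + 1) = 0. *)

From HB Require Import structures.
From mathcomp Require Import all_boot all_order all_algebra all_fingroup zify.
From Stdlib Require Import Classical FunctionalExtensionality.
Import GRing.Theory.
Local Open Scope ring_scope.
Set Implicit Arguments. Unset Strict Implicit. Unset Printing Implicit Defensive.

Section LinearAlgebra.
Variable K : fieldType.

Lemma linfun_linearE (aT rT : vectType K) (f : aT -> rT) : linear f -> linfun f =1 f.
Proof.
by move=> f_lin; apply: (lfunE (HB.pack f (GRing.isLinear.Build _ _ _ _ f f_lin))).
Qed.

Section SubspacePred.
Variables (A : vectType K) (P : A -> Prop).

Definition subspace_pred := P 0 /\ forall a u v, P u -> P v -> P (a *: u + v).

Hypothesis P_sub : subspace_pred.

Lemma subspace_predD u v : P u -> P v -> P (u + v).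
Proof. by move=> Pu Pv; rewrite -[u]scale1r; apply: P_sub.2. Qed.

Lemma subspace_predZ a u : P u -> P (a *: u).
Proof. by move=> Pu; rewrite -[_ *: _]addr0; apply: P_sub.2 => //; apply: P_sub.1. Qed.

Lemma subspace_predN u : P u -> P (- u).
Proof. by rewrite -scaleN1r; apply: subspace_predZ. Qed.

Lemma subspace_pred_sum (I : Type) (r : seq I) (F : I -> A) :
  (forall i, P (F i)) -> P (\sum_(i <- r) F i).
Proof.
by move=> PF; elim/big_ind: _ => //; [apply: P_sub.1 | apply: subspace_predD].
Qed.

Lemma vspace_of_subspace_pred : exists X : {vspace A}, forall v, v \in X <-> P v.
Proof.
suff [X [XP [dimX | PX]]] : exists X : {vspace A},
    (forall v, v \in X -> P v) /\ ((dim A).+1 <= \dim X \/ forall v, P v -> v \in X)%N.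
- by have := dimvS (subvf X); rewrite dimvf => /(leq_trans dimX); rewrite ltnn.
- by exists X => v; split; [apply: XP | apply: PX].
elim: (dim A).+1 => [|m [X [XP dimX_or_PX]]].
  exists 0%VS; split; last by left.
  by move=> v; rewrite memv0 => /eqP ->; apply: P_sub.1.
case: (classic (forall v, P v -> v \in X)) => [PX | /not_all_ex_not[v notXv]].
  by exists X; split => //; right.
have [Pv /negP vX] := conj (not_imply_elim _ _ notXv) (not_imply_elim2 _ _ notXv).
have {dimX_or_PX} dimX : (m <= \dim X)%N.
  by case: dimX_or_PX => // PX; rewrite PX in vX.
exists (X + <[v]>)%VS; split.
  move=> _ /memv_addP[u Xu [_ /vlineP[c ->] ->]].
  by rewrite addrC; apply: P_sub.2 => //; apply: XP.
left; apply: leq_ltn_trans dimX _.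
rewrite (ltn_leqif (dimv_leqif_eq (addvSl X <[v]>))).
by apply: contra vX => /eqP ->; apply: subvP (addvSr X _) _ (memv_line v).
Qed.
End SubspacePred.

Lemma eq_nilpotent_op (A : vectType K) (f g : A -> A) :
  nilpotent_op f -> f =1 g -> nilpotent_op g.
Proof. by move=> [N fN] fg; exists N => v; rewrite -(eq_iter fg). Qed.

Section Span.
Variables (A : vectType K) (I : Type) (F : I -> A).

Definition in_span (v : A) := exists s : seq (K * I), v = \sum_(p <- s) p.1 *: F p.2.

Lemma in_span_subspace : subspace_pred in_span.
Proof.
split; first by exists [::]; rewrite big_nil.
move=> a _ _ [s ->] [t ->]; exists ([seq (a * p.1, p.2) | p <- s] ++ t).
rewrite big_cat big_map scaler_sumr; congr (_ + _).
by apply: eq_bigr => p _; rewrite scalerA.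
Qed.

Lemma in_span_gen i : in_span (F i).
Proof. by exists [:: (1, i)]; rewrite big_seq1 scale1r. Qed.

Lemma in_span_ind (P : A -> Prop) :
  subspace_pred P -> (forall i, P (F i)) -> forall v, in_span v -> P v.
Proof.
move=> P_sub PF _ [s ->]; apply: subspace_pred_sum => // p.
exact: subspace_predZ.
Qed.

Lemma in_span_ord (i0 : I) v : in_span v ->
  exists k (c : 'I_k -> K) (xs : 'I_k -> I), v = \sum_(j < k) c j *: F (xs j).
Proof.
case=> s ->; exists (size s), (fun j => (nth (0, i0) s j).1), (fun j => (nth (0, i0) s j).2).
by rewrite (big_nth (0, i0)) big_mkord.
Qed.

End Span.

Section Commutator.
Variable A : vectType K.
Implicit Types f g h : 'End(A).

Definition lcomm f g : 'End(A) := (f \o g)%VF - (g \o f)%VF.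

Lemma lcommE f g v : lcomm f g v = f (g v) - g (f v).
Proof. by rewrite /lcomm add_lfunE opp_lfunE !comp_lfunE. Qed.

Lemma lcommC f g : lcomm f g = - lcomm g f.
Proof. by apply/lfunP => v; rewrite opp_lfunE !lcommE opprB. Qed.

Lemma lcommDl f g h : lcomm (f + g) h = lcomm f h + lcomm g h.
Proof.
by apply/lfunP => v; rewrite add_lfunE !lcommE !add_lfunE linearD /= opprD addrACA.
Qed.

Lemma lcommZl a f g : lcomm (a *: f) g = a *: lcomm f g.
Proof.
by apply/lfunP => v; rewrite scale_lfunE !lcommE !scale_lfunE linearZ /= scalerBr.
Qed.

Lemma lcommDr f g h : lcomm f (g + h) = lcomm f g + lcomm f h.
Proof. by rewrite lcommC lcommDl opprD -!lcommC. Qed.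

Lemma lcommZr a f g : lcomm f (a *: g) = a *: lcomm f g.
Proof. by rewrite lcommC lcommZl -scalerN -lcommC. Qed.

Lemma lcommxx f : lcomm f f = 0.
Proof. by apply/lfunP => v; rewrite lcommE subrr zero_lfunE. Qed.

Definition lie_subalgebra (L : {vspace 'End(A)}) :=
  forall f g, f \in L -> g \in L -> lcomm f g \in L.

End Commutator.

Section Adjoint.
Variable A : vectType K.
Implicit Types f g h : 'End(A).

Definition ad : 'Hom('End(A), 'End('End(A))) := linfun (fun f => linfun (lcomm f)).

Lemma adE f g : ad f g = lcomm f g.
Proof.
have lcomm_linear f' : linear (lcomm f') by move=> c g1 g2; rewrite lcommDr lcommZr.
rewrite linfun_linearE ?linfun_linearE // => c f1 f2.
by apply/lfunP => g'; rewrite add_lfunE scale_lfunE !linfun_linearE // lcommDl lcommZl.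
Qed.

Lemma ad_lcomm f g : ad (lcomm f g) = lcomm (ad f) (ad g).
Proof.
have jacobi_zmod (M : zmodType) (a b c d e k : M) :
    a - b + (- c + d) = a - e + (- k + d) + (- b + k + (e - c)).
  rewrite [- b + k + _]addrC [RHS]addrACA subrKA (addrC (- k)) (addrC (- b) k).
  by rewrite subrKA (addrC (- c)) addrACA [RHS]addrACA (addrC (- b)).
apply/lfunP => h; apply/lfunP => v.
rewrite adE (lcommE (ad f)) !adE !lcommE add_lfunE opp_lfunE !lcommE !raddfB /=.
by rewrite !opprK; apply: jacobi_zmod.
Qed.

Lemma ad_nilpotent f : nilpotent_op f -> nilpotent_op (ad f).
Proof.
case=> N fN.
have iter_f0 i : iter i f 0 = 0 by elim: i => //= i ->; rewrite linear0.
have iter_fB i u w : iter i f (u - w) = iter i f u - iter i f w.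
  by elim: i => //= i ->; rewrite linearB.
(* ad f = (f \o _) - (_ \o f), so (ad f)^m g is a combination of the f^i g f^j, i + j = m. *)
pose vanishes k (g : 'End(A)) :=
  forall i j v, (i + j = k)%N -> iter i f (g (iter j f v)) = 0.
have vanishes_ad k g : vanishes k.+1 g -> vanishes k (ad f g).
  move=> gk i j v ij; rewrite adE lcommE iter_fB -iterSr -iterS.
  by rewrite (gk i.+1 j) ?(gk i j.+1) ?subrr ?addnS ?addSn ?ij.
have vanishes_NN g : vanishes (N + N) g.
  move=> i j v ij; case: (leqP N i) => [Ni | iN].
    by rewrite -(subnK Ni) iterD fN iter_f0.
  have Nj : (N <= j)%N by rewrite -(leq_add2l i) ij leq_add2r ltnW.
  by rewrite -(subnK Nj) iterD fN iter_f0 linear0 iter_f0.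
have vanishes_iter_ad m k g : vanishes (m + k)%N g -> vanishes k (iter m (ad f) g).
  by elim: m k => [|m IHm] k // gk; apply/vanishes_ad/IHm; rewrite addnS.
exists (N + N) => g; apply/lfunP => v; rewrite zero_lfunE.
by apply: (vanishes_iter_ad (N + N)%N 0%N g _ 0%N 0%N) => //; rewrite addn0.
Qed.

End Adjoint.

Lemma last_iter_outside (T : Type) (y : T -> T) (S U : T -> Prop) N w :
  (forall v, S v -> S (y v)) -> U (iter N y w) -> S w -> ~ U w ->
  exists v, [/\ S v, ~ U v & U (y v)].
Proof.
move=> Sy; elim: N w => [|N IHN] w; first by move=> ? _ [].
rewrite iterSr => UN Sw Uw; case: (classic (U (y w))) => [Uyw | Uyw].
  by exists w.
exact: IHN UN (Sy w Sw) Uyw.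
Qed.

Section MaximalSubalgebra.
Variable A : vectType K.

Lemma lie_subalgebra0 : lie_subalgebra (0%VS : {vspace 'End(A)}).
Proof. by move=> f g; rewrite !memv0 => /eqP -> /eqP ->; rewrite lcommxx. Qed.

Lemma lie_subalgebra_addv_line (L : {vspace 'End(A)}) y :
  lie_subalgebra L -> {in L, forall f, lcomm f y \in L} -> lie_subalgebra (L + <[y]>).
Proof.
move=> lieL Ly _ _ /memv_addP[f Lf [_ /vlineP[a ->] ->]] /memv_addP[g Lg [_ /vlineP[b ->] ->]].
rewrite lcommDl !lcommDr !lcommZl !lcommZr lcommxx !scaler0 addr0 (lcommC y).
apply: (subvP (addvSl L <[y]>)).
by apply: memvD; [apply: memvD; [exact: lieL | exact/memvZ/Ly] | by rewrite memvZ // memvN Ly].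
Qed.

Definition maximal_lie_subalgebra (L K1 : {vspace 'End(A)}) :=
  [/\ (K1 <= L)%VS, K1 != L, lie_subalgebra K1 &
    forall K2, (K1 <= K2 <= L)%VS -> lie_subalgebra K2 -> K2 = K1 \/ K2 = L].

Lemma exists_maximal_lie_subalgebra (L : {vspace 'End(A)}) :
  L != 0%VS -> exists K1, maximal_lie_subalgebra L K1.
Proof.
move=> L0; suff /(_ (\dim L) 0%VS) : forall m (K0 : {vspace 'End(A)}),
    (K0 <= L)%VS -> K0 != L -> lie_subalgebra K0 -> (\dim L - \dim K0 <= m)%N ->
    exists K1, maximal_lie_subalgebra L K1.
  by apply; rewrite ?sub0v 1?eq_sym ?leq_subr //; apply: lie_subalgebra0.
elim=> [|m IHm] K0 K0L K0L' lieK0 codimK0.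
  by case/negP: K0L'; rewrite eqEdim K0L -subn_eq0 -leqn0.
case: (classic (forall K2, (K0 <= K2 <= L)%VS -> lie_subalgebra K2 ->
  K2 = K0 \/ K2 = L)) => [maxK0 | notmax]; first by exists K0; split.
have [K2 /andP[K02 K2L] [lieK2 /not_or_and[K20 K2L']]] : exists2 K2 : {vspace 'End(A)},
    (K0 <= K2 <= L)%VS & lie_subalgebra K2 /\ ~ (K2 = K0 \/ K2 = L).
  by apply: NNPP => none; apply: notmax => K2 ? ?; apply: NNPP => ?; apply: none; exists K2.
have dimK02 : (\dim K0 < \dim K2 <= \dim L)%N.
  by rewrite dimvS // andbT (ltn_leqif (dimv_leqif_eq K02)) eq_sym; apply/eqP.
by apply: IHm K2L (introN eqP K2L') lieK2 _; lia.
Qed.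

End MaximalSubalgebra.

Theorem engel (A : vectType K) (L : {vspace 'End(A)}) (U : {vspace A}) (W : A -> Prop) :
  lie_subalgebra L -> {in L, forall f : 'End(A), nilpotent_op f} ->
  (forall f u, f \in L -> u \in U -> f u \in U) ->
  (forall f w, f \in L -> W w -> W (f w)) ->
  forall w, W w -> w \notin U ->
  exists v, [/\ W v, v \notin U & forall f, f \in L -> f v \in U].
Proof.
have [d] := ubnP (\dim L); elim: d A L U W => // d IHd A L U W dimL lieL nilL LU LW w Ww wU.
have [-> | L0] := eqVneq L 0%VS.
  by exists w; split=> // f; rewrite memv0 => /eqP ->; rewrite zero_lfunE mem0v.
have [K1 [K1L K1L' lieK1 maxK1]] := exists_maximal_lie_subalgebra L0.
have dimK1 : (\dim K1 < \dim L)%N by rewrite (ltn_leqif (dimv_leqif_eq K1L)).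
have [y [yL yK1 K1y]] :
    exists y, [/\ y \in L, y \notin K1 & forall k, k \in K1 -> lcomm k y \in K1].
  have [w1 w1L w1K1] : exists2 w1, w1 \in L & w1 \notin K1.
    by apply/subvPn; apply: contra K1L' => LK1; rewrite eqEsubv K1L.
  have [|||||y [yL yK1 K1y]] :=
    IHd _ (ad A @: K1)%VS K1 (fun g => g \in L) _ _ _ _ _ w1 w1L w1K1.
  - rewrite -ltnS (leq_trans _ dimL) // ltnS (leq_trans _ dimK1) // ltnS.
    by rewrite -[leqRHS](limg_ker_dim (ad A) K1) leq_addl.
  - move=> _ _ /memv_imgP[f K1f ->] /memv_imgP[g K1g ->].
    by rewrite -ad_lcomm memv_img ?lieK1.
  - by move=> _ /memv_imgP[f K1f ->]; apply/ad_nilpotent/nilL/(subvP K1L).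
  - by move=> _ u /memv_imgP[f K1f ->] K1u; rewrite adE lieK1.
  - by move=> _ g /memv_imgP[f K1f ->] Lg; rewrite adE; apply: lieL => //; apply: (subvP K1L).
  exists y; split=> // k K1k; rewrite -adE.
  exact: K1y (memv_img (ad A) K1k).
have K1yL : (K1 + <[y]>)%VS = L.
  have [||K1y_eq|//] := maxK1 (K1 + <[y]>)%VS.
  - by rewrite addvSl subv_add K1L -memvE.
  - exact: lie_subalgebra_addv_line.
  - by case/negP: yK1; rewrite -K1y_eq; apply: (subvP (addvSr K1 _)); apply: memv_line.
have [||||w2 [Ww2 w2U K1w2]] := IHd A K1 U W _ lieK1 _ _ _ w Ww wU.
- lia.
- by move=> f /(subvP K1L); apply: nilL.
- by move=> f u /(subvP K1L); apply: LU.
- by move=> f u /(subvP K1L); apply: LW.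
have [N yN] := nilL y yL.
have [||||v [[Wv K1v] vU yvU]] := @last_iter_outside _ y
  (fun v => W v /\ forall k, k \in K1 -> k v \in U) (fun v => v \in U) N w2.
- move=> u [Wu K1u]; split=> [|k K1k]; first exact: LW.
  rewrite -[k (y u)](subrK (y (k u))) -lcommE.
  by apply: memvD; [apply/K1u/K1y | apply/LU/K1u].
- by rewrite yN mem0v.
- by split.
- exact/negP.
exists v; split=> //; first exact/negP.
move=> f; rewrite -K1yL => /memv_addP[k K1k [_ /vlineP[c ->] ->]].
by rewrite add_lfunE scale_lfunE memvD ?K1v // memvZ.
Qed.

Section Annihilation.
Variables (A : vectType K) (S : 'End(A) -> Prop).

Fixpoint annihilated (j : nat) (v : A) : Prop :=
  if j is j'.+1 then forall f, S f -> annihilated j' (f v) else v = 0.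

Lemma annihilated_subspace j : subspace_pred (annihilated j).
Proof.
elim: j => [|j [IH0 IHP]]; first by split=> // a _ _ -> ->; rewrite scaler0 addr0.
split=> [f _ | a u v Hu Hv f Sf] /=; first by rewrite linear0.
by rewrite linearP; apply: IHP; [apply: Hu | apply: Hv].
Qed.

Lemma annihilatedS j v : annihilated j v -> annihilated j.+1 v.
Proof.
elim: j v => [|j IHj] v /=; first by move=> -> f _; rewrite linear0.
by move=> Hv f Sf; apply/IHj/Hv.
Qed.

Lemma annihilated_stable j f v : S f -> annihilated j v -> annihilated j (f v).
Proof. by move=> Sf /annihilatedS; apply. Qed.

Lemma annihilated_dim :
  (forall U : {vspace A}, U != fullv -> (forall f u, S f -> u \in U -> f u \in U) ->
     exists2 v, v \notin U & forall f, S f -> f v \in U) ->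
  forall v, annihilated (dim A) v.
Proof.
move=> step; suff [X [XP dimX]] : exists X : {vspace A},
    (forall v, v \in X <-> annihilated (dim A) v) /\ (X = fullv \/ (dim A <= \dim X)%N).
  have X_full : X = fullv by case: dimX => // dimX; apply/eqP; rewrite eqEdim subvf dimvf.
  by move=> v; apply/XP; rewrite X_full memvf.
elim: (dim A) => [|j [X [XP dimX]]].
  by exists 0%VS; split; [move=> v; rewrite memv0; split => [/eqP|->] | right].
have [Y YP] := vspace_of_subspace_pred (annihilated_subspace j.+1).
exists Y; split=> //.
have XY : (X <= Y)%VS by apply/subvP => v /XP /annihilatedS /YP.
have [X_full | Xfull] := eqVneq X fullv.
  by left; apply/eqP; rewrite eqEsubv subvf -X_full.
have [|v vX Sv] := step X Xfull.
  by move=> f u Sf /XP Xu; apply/XP/annihilated_stable.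
right; case: dimX => [X_eq | dimX]; first by rewrite X_eq eqxx in Xfull.
apply: leq_ltn_trans dimX _; rewrite (ltn_leqif (dimv_leqif_eq XY)).
by apply: contra vX => /eqP ->; apply/YP => f Sf; apply/XP/Sv.
Qed.

End Annihilation.

Theorem engel_pair (A : vectType K) (L1 L2 : {vspace 'End(A)}) :
  lie_subalgebra L1 -> lie_subalgebra L2 ->
  {in L1, forall f : 'End(A), nilpotent_op f} -> {in L2, forall f : 'End(A), nilpotent_op f} ->
  (forall f g, f \in L2 -> g \in L1 -> lcomm f g \in L1) ->
  forall v, annihilated (fun f => f \in L1 \/ f \in L2) (dim A) v.
Proof.
move=> lie1 lie2 nil1 nil2 L2L1; apply: annihilated_dim => U Ufull LU.
have [w _ wU] : exists2 w, w \in fullv & w \notin U.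
  by apply/subvPn; apply: contra Ufull => fullU; rewrite eqEsubv subvf.
have [v1 [_ v1U L1v1]] := engel (W := fun _ => True) lie1 nil1
  (fun f u L1f => LU f u (or_introl L1f)) (fun _ _ _ _ => I) I wU.
have [|v [L1v vU L2v]] := engel (W := fun v => forall g, g \in L1 -> g v \in U) lie2 nil2
  (fun f u L2f => LU f u (or_intror L2f)) _ L1v1 v1U.
  move=> f u L2f L1u g L1g.
  have -> : g (f u) = f (g u) - lcomm f g u by rewrite lcommE opprB addrC subrK.
  by apply: memvB; [apply: LU; [right | apply: L1u] | apply/L1u/L2L1].
by exists v => // f [L1f | L2f]; [apply: L1v | apply: L2v].
Qed.

End LinearAlgebra.

Section PoissonNLie.
Variables (K : fieldType) (V : vectType K) (n' : nat).
Local Notation n := n'.+2.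
Variables (mul : V -> V -> V) (br : ('I_n -> V) -> V).
Local Notation lcs := (lcs mul br).

Section Tuples.
Implicit Types (y : 'I_n.-1 -> V) (z : V).

Lemma eq_ord_max (i : 'I_n) : (i < n.-1)%N = false -> i = ord_max.
Proof.
move=> i_max; apply: val_inj => /=; move: (ltn_ord i) i_max.
by rewrite ltnS leq_eqVlt => /orP[/eqP ->|->].
Qed.

Lemma app_last_upd y z : app_last y z = upd (app_last y 0) ord_max z.
Proof.
apply: functional_extensionality => i; rewrite /app_last /upd.
case: insubP => [j /= lt_i _ | /negbTE/eq_ord_max ->]; last by rewrite eqxx.
by case: eqP => // i_max; move: lt_i; rewrite i_max ltnn.
Qed.

Lemma app_last_max y z : app_last y z ord_max = z.
Proof. by rewrite app_last_upd /upd eqxx. Qed.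

Lemma app_last_widen y z (j : 'I_n.-1) : app_last y z (widen_ord (leqnSn _) j) = y j.
Proof.
rewrite /app_last; case: insubP => [k _ /= kj | /=]; last by rewrite ltn_ord.
by congr y; apply: val_inj.
Qed.

Lemma upd_app_last_max y z w : upd (app_last y z) ord_max w = app_last y w.
Proof.
rewrite [RHS]app_last_upd [app_last y z]app_last_upd.
by apply: functional_extensionality => i; rewrite /upd; case: eqP.
Qed.

Lemma upd_app_last_widen y z (j : 'I_n.-1) w :
  upd (app_last y z) (widen_ord (leqnSn _) j) w = app_last (upd y j w) z.
Proof.
apply: functional_extensionality => i; rewrite /upd /app_last.
case: insubP => [k _ /= ki | /= lt_i].
  by rewrite -(inj_eq val_inj) /= -ki (inj_eq val_inj).
by case: eqP => // ij; rewrite ij /= ltn_ord in lt_i.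
Qed.

End Tuples.

Section Operators.
Hypotheses (mul_ca : comm_assoc_algebra mul) (br_multilinear : multilinear br)
  (br_skew : skew_symmetric br) (br_fundamental : fundamental_identity br)
  (br_leibniz : leibniz mul br).

(* Swaps the first slot, where the Leibniz rule acts, with the last one, where Q_y acts. *)
Local Notation t := (tperm (ord0 : 'I_n) ord_max).

Lemma mulC x y : mul x y = mul y x.
Proof. by case: mul_ca. Qed.

Lemma mulA x y z : mul x (mul y z) = mul (mul x y) z.
Proof. by case: mul_ca. Qed.

Lemma mul_linear x : linear (Pop mul x).
Proof. by case: mul_ca => _ mulP _ _ a u v; rewrite /Pop mulP. Qed.

Lemma Qop_linear y : linear (Qop br y).
Proof.
move=> a u v; rewrite /Qop (app_last_upd y (a *: u + v)) (app_last_upd y u).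
by rewrite (app_last_upd y v) br_multilinear.
Qed.

Definition Pmap x : 'End(V) := linfun (Pop mul x).
Definition Qmap y : 'End(V) := linfun (Qop br y).

Lemma PmapE x v : Pmap x v = mul x v.
Proof. exact: linfun_linearE (mul_linear x) v. Qed.

Lemma QmapE y v : Qmap y v = Qop br y v.
Proof. exact: linfun_linearE (Qop_linear y) v. Qed.

Lemma PmapP a x y : Pmap (a *: x + y) = a *: Pmap x + Pmap y.
Proof.
apply/lfunP => v; rewrite add_lfunE scale_lfunE !PmapE.
by case: mul_ca => mulP _ _ _; rewrite mulP.
Qed.

Lemma lcomm_Pmap x y : lcomm (Pmap x) (Pmap y) = 0.
Proof.
by apply/lfunP => v; rewrite lcommE !PmapE zero_lfunE mulA (mulC x) -mulA subrr.
Qed.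

Lemma br_swap_ends f : br (f \o t) = - br f.
Proof.
have ord0_max : (ord0 : 'I_n) != ord_max by rewrite -(inj_eq val_inj).
by rewrite (br_skew f t) odd_tperm ord0_max scaleN1r.
Qed.

Lemma br_Qop f : br f = - Qop br (fun j => f (t (widen_ord (leqnSn _) j))) (f ord0).
Proof.
apply: (canRL opprK); rewrite /Qop -br_swap_ends; congr br.
apply: functional_extensionality => i; rewrite /app_last /=.
case: insubP => [j _ /= ji | /negbTE/eq_ord_max ->]; last by rewrite tpermR.
by congr (f (t _)); apply: val_inj.
Qed.

Lemma Qop_br y z : Qop br y z = - br (upd (app_last y 0 \o t) ord0 z).
Proof.
apply: (canRL opprK); rewrite /Qop -br_swap_ends; congr br.
apply: functional_extensionality => i; rewrite /upd /=.
case: eqP => [-> | i0]; first by rewrite tpermL app_last_max.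
rewrite [app_last y z]app_last_upd /upd; case: eqP => // ti_max.
by case: i0; apply: (@perm_inj _ t); rewrite ti_max tpermL.
Qed.

Definition derivation (f : 'End(V)) := forall x w, f (mul x w) = mul x (f w) + mul w (f x).

Lemma derivation_subspace : subspace_pred derivation.
Proof.
split=> [x w | a f g df dg x w]; first by rewrite !zero_lfunE -!PmapE !linear0 addr0.
rewrite !add_lfunE !scale_lfunE df dg -!PmapE !linearP /= !PmapE scalerDr.
exact: addrACA.
Qed.

Lemma derivation_Qmap y : derivation (Qmap y).
Proof.
move=> x w; rewrite !QmapE !Qop_br (@br_leibniz _ ord0 erefl).
by rewrite -!PmapE !linearN /= opprD.
Qed.

Lemma lcomm_derivation_Pmap f x : derivation f -> lcomm f (Pmap x) = Pmap (f x).
Proof.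
by move=> df; apply/lfunP => v; rewrite lcommE !PmapE df addrC addKr mulC.
Qed.

Lemma lcomm_Qmap x y :
  lcomm (Qmap x) (Qmap y) = \sum_(j < n.-1) Qmap (upd y j (Qop br x (y j))).
Proof.
apply/lfunP => v; rewrite lcommE sum_lfunE !QmapE.
rewrite [Qop br y v]/Qop br_fundamental big_ord_recr /= app_last_max upd_app_last_max.
rewrite addrK; apply: eq_bigr => j _.
by rewrite app_last_widen upd_app_last_widen QmapE.
Qed.

Lemma lcomm_span_Qmap f g : in_span Qmap f -> in_span Qmap g -> in_span Qmap (lcomm f g).
Proof.
have [span0 spanP] := in_span_subspace Qmap.
move=> + spg; move: f; apply: in_span_ind => [|x]; last first.
  move: g spg; apply: in_span_ind => [|y].
    split=> [|a g1 g2]; first by rewrite -(scale0r 0) lcommZr scale0r.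
    by rewrite lcommDr lcommZr; apply: spanP.
  by rewrite lcomm_Qmap; apply: subspace_pred_sum => // j; apply: in_span_gen.
split=> [|a f1 f2]; first by rewrite -(scale0r 0) lcommZl scale0r.
by rewrite lcommDl lcommZl; apply: spanP.
Qed.

Lemma Pmap_range_subspace : subspace_pred (fun f => exists x, f = Pmap x).
Proof.
split; first by exists 0; apply/lfunP => v; rewrite zero_lfunE PmapE mulC -PmapE linear0.
by move=> a _ _ [x ->] [y ->]; exists (a *: x + y); rewrite PmapP.
Qed.

Lemma nilpotent_span_Qmap f :
  (forall k (c : 'I_k -> K) (ys : 'I_k -> 'I_n.-1 -> V),
     nilpotent_op (fun z => \sum_(j < k) c j *: Qop br (ys j) z)) ->
  in_span Qmap f -> nilpotent_op f.
Proof.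
move=> nilQ /(in_span_ord (fun _ => 0))[k [c [ys ->]]].
have [N QN] := nilQ k c ys; exists N => v; rewrite -[RHS](QN v).
by apply: eq_iter => z; rewrite sum_lfunE; apply: eq_bigr => j _; rewrite scale_lfunE QmapE.
Qed.

Lemma lcs_annihilated (S : 'End(V) -> Prop) :
  (forall x, S (Pmap x)) -> (forall y, S (Qmap y)) ->
  forall k j v, (forall w, annihilated S (k + j) w) -> lcs k v -> annihilated S j v.
Proof.
move=> SP SQ; elim=> [|k IHk] j v annih //= [m [c [w [lcs_w ->]]]].
have [ann0 annP] := annihilated_subspace S j.
apply: subspace_pred_sum => // i; apply: subspace_predZ => //.
have annih' u : annihilated S (k + j.+1) u by rewrite addnS; apply: annih.
case: (lcs_w i) => [[f [lcs_f ->]] | [a [b [lcs_a ->]]]].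
  rewrite br_Qop -QmapE; apply: subspace_predN => //.
  exact: (IHk j.+1 (f ord0) annih' (lcs_f ord0 erefl)).
by rewrite mulC -PmapE; apply: (IHk j.+1 a annih' lcs_a).
Qed.

Lemma lcs_Pop k x z : lcs k z -> lcs k.+1 (Pop mul x z).
Proof.
move=> lcs_z; exists 1%N, (fun _ => 1), (fun _ => mul z x); split.
  by move=> j; right; exists z, x.
by rewrite big_ord1 scale1r /Pop mulC.
Qed.

Lemma lcs_Qop_sum k m (c : 'I_m -> K) (ys : 'I_m -> 'I_n.-1 -> V) z :
  lcs k z -> lcs k.+1 (\sum_(j < m) c j *: Qop br (ys j) z).
Proof.
move=> lcs_z; exists m, (fun j => - c j), (fun j => br (upd (app_last (ys j) 0 \o t) ord0 z)).
split; last by apply: eq_bigr => j _; rewrite Qop_br scalerN scaleNr.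
move=> j; left; exists (upd (app_last (ys j) 0 \o t) ord0 z); split=> // i i0.
by have -> : i = ord0 by apply: val_inj.
Qed.

Lemma lcs_iter (T : V -> V) :
  (forall k z, lcs k z -> lcs k.+1 (T z)) -> forall k z, lcs k (iter k T z).
Proof. by move=> lcsT; elim=> //= k IHk z; apply/lcsT/IHk. Qed.

Lemma nilpotent_ops_of_nilpotent_alg : nilpotent_alg mul br ->
  (forall x, nilpotent_op (Pop mul x)) /\
  (forall k (c : 'I_k -> K) (ys : 'I_k -> 'I_n.-1 -> V),
     nilpotent_op (fun z => \sum_(j < k) c j *: Qop br (ys j) z)).
Proof.
move=> [s Ps]; have nilpotent_of_lcs T : (forall k z, lcs k z -> lcs k.+1 (T z)) ->
    nilpotent_op T by exists s.-1 => z; apply/Ps/lcs_iter.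
by split=> [x | k c ys]; apply: nilpotent_of_lcs => k' z; [apply: lcs_Pop | apply: lcs_Qop_sum].
Qed.

Lemma nilpotent_alg_of_nilpotent_ops :
  (forall x, nilpotent_op (Pop mul x)) ->
  (forall k (c : 'I_k -> K) (ys : 'I_k -> 'I_n.-1 -> V),
     nilpotent_op (fun z => \sum_(j < k) c j *: Qop br (ys j) z)) ->
  nilpotent_alg mul br.
Proof.
move=> nilP nilQ.
have [LP LPP] := vspace_of_subspace_pred Pmap_range_subspace.
have [LQ LQP] := vspace_of_subspace_pred (in_span_subspace Qmap).
have derivation_LQ f : f \in LQ -> derivation f.
  by move/LQP; apply: in_span_ind; [apply: derivation_subspace | apply: derivation_Qmap].
have annih v : annihilated (fun f => f \in LP \/ f \in LQ) (dim V) v.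
  apply: engel_pair.
  - by move=> _ _ /LPP[x ->] /LPP[y ->]; rewrite lcomm_Pmap mem0v.
  - by move=> f g /LQP spf /LQP spg; apply/LQP/lcomm_span_Qmap.
  - by move=> _ /LPP[x ->]; apply: eq_nilpotent_op (nilP x) (fun u => esym (PmapE x u)).
  - by move=> f /LQP; apply: nilpotent_span_Qmap.
  - move=> f _ /derivation_LQ df /LPP[x ->].
    by rewrite lcomm_derivation_Pmap //; apply/LPP; exists (f x).
exists (dim V).+1 => v.
apply: (@lcs_annihilated (fun f => f \in LP \/ f \in LQ) _ _ (dim V) 0%N).
- by move=> x; left; apply/LPP; exists x.
- by move=> y; right; apply/LQP/in_span_gen.
- by move=> w; rewrite addn0; apply: annih.
Qed.

End Operators.
End PoissonNLie.

Theorem theorem5p5 (K : fieldType) (V : vectType K) (n : nat)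
    (mul : V -> V -> V) (br : ('I_n -> V) -> V) :
  (2 <= n)%N ->
  poisson_nLie mul br ->
  nilpotent_alg mul br <->
  ((forall x : V, nilpotent_op (Pop mul x)) /\
   (* Q_y for an arbitrary y in wedge^(n-1) P, i.e. y = sum_j c_j xs_j_1 /\ ... /\ xs_j_(n-1) *)
   (forall (k : nat) (c : 'I_k -> K) (xs : 'I_k -> 'I_n.-1 -> V),
      nilpotent_op (fun z => \sum_(j < k) c j *: Qop br (xs j) z))).
Proof.
case: n br => [|[|n']] br // _ [mul_ca br_multilinear br_skew br_fundamental br_leibniz].
split; first exact: nilpotent_ops_of_nilpotent_alg.
by case; apply: nilpotent_alg_of_nilpotent_ops.
Qed.
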